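(* Let $p\in\mathcal H(3,d)$ with $p(x_1,x_2,x_3)=a(x_1,x_2)+x_3\,b(x_1,x_2)$ for polynomials $a,b$. Suppose two monomials $m_1,m_2$ in the variables $x_1,x_2$ only, both of degree $d$, occur in $p$ and satisfy $\delta(m_1,m_2)\ge 4$. Then $p$ has at least $d+1$ distinct monomials that depend on $x_3$.
   Context: $\mathcal H(3,d)$ is the set of real polynomials in $x_1,x_2,x_3$ of total degree exactly $d$, with all coefficients nonnegative, such that $p(x)=1$ whenever $x_1+x_2+x_3=1$. For monomials $m_1=x_1^{\alpha_1}\cdots x_n^{\alpha_n}$ and $m_2=x_1^{\beta_1}\cdots x_n^{\beta_n}$, $\delta(m_1,m_2)=\sum_j|\alpha_j-\beta_j|$. *)

From mathcomp Require Import all_boot all_algebra.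
From mathcomp Require Import reals.
From mathcomp Require Import mpoly.
Set Implicit Arguments. Unset Strict Implicit. Unset Printing Implicit Defensive.
Import GRing.Theory Num.Theory.
Local Open Scope ring_scope.

Definition ix1 : 'I_3 := @Ordinal 3 0 isT.
Definition ix2 : 'I_3 := @Ordinal 3 1 isT.
Definition ix3 : 'I_3 := @Ordinal 3 2 isT.

(* H(3,d): real polynomials in x1,x2,x3 of total degree exactly d,
   nonnegative coefficients, and p(x) = 1 whenever x1+x2+x3 = 1. *)
Definition inH3 (R : realType) (d : nat) (p : {mpoly R[3]}) : Prop :=
  [/\ msize p = d.+1,
      (forall m : 'X_{1..3}, 0 <= p@_m) &
      (forall x : 'I_3 -> R, x ix1 + x ix2 + x ix3 = 1 -> p.@[x] = 1)].

Definition mdelta (n : nat) (m1 m2 : 'X_{1..n}) : nat :=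
  (\sum_(j < n) ((m1 j - m2 j) + (m2 j - m1 j)))%N.

From mathcomp Require Import all_boot all_order all_algebra.
From mathcomp Require Import reals.
From mathcomp Require Import mpoly.
From mathcomp Require Import zify ring lra.
Set Implicit Arguments. Unset Strict Implicit. Unset Printing Implicit Defensive.
Import Order.TTheory GRing.Theory Num.Theory.
Local Open Scope ring_scope.

(* Write p = a + x3 b.  Substituting x3 = 1 - x1 - x2 turns the hypothesis into the
   polynomial identity a + (1 - x1 - x2) b = 1, i.e. for every nonconstant monomial k
   in x1, x2 we have a_k + b_k = b_(k - e1) + b_(k - e2).  As the coefficients are
   nonnegative, a positive left-hand side forces a positive coefficient of b one
   degree lower.  Since m1 and m2 have top degree, b_m1 = b_m2 = 0, so b has positive
   coefficients at some m1 - e_i and m2 - e_j of degree d - 1; these are distinct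
   because delta(m1, m2) >= 4, and descending from one of them yields a monomial of b
   in every degree below d - 1.  This gives d + 1 monomials x3 * x^k in p. *)

Section MpolyCoefficients.
Variables (R : nzRingType) (n : nat).
Implicit Types (p r : {mpoly R[n]}) (i : 'I_n) (k m : 'X_{1..n}).

Lemma big_msupp_delta p (G : 'X_{1..n} -> R) t :
  (forall m, m \notin msupp p -> G m = 0) ->
  \sum_(m <- msupp p) G m * (m == t)%:R = G t.
Proof.
move=> G0; have [t_p | t_p] := boolP (t \in msupp p).
  rewrite (bigD1_seq t) ?msupp_uniq //= eqxx mulr1 big1 ?addr0 // => m /negbTE->.
  by rewrite mulr0.
rewrite G0 // big_seq big1 // => m m_p.
by rewrite (_ : m == t = false) ?mulr0 //; apply: contraNF t_p => /eqP <-.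
Qed.

Definition mdivX i p : {mpoly R[n]} :=
  \sum_(m <- msupp p | (0 < m i)%N) p@_m *: 'X_[m - U_(i)].

Lemma subU_eq i k m : ((0 < m i)%N && (m - U_(i) == k)%MM) = (m == k + U_(i))%MM.
Proof.
apply/andP/eqP => [[m_i /eqP <-] | ->]; first by rewrite submK // lep1mP -lt0n.
by rewrite addmK mnmDE mnm1E eqxx addn1.
Qed.

Lemma mcoeff_mdivX i p k : (mdivX i p)@_k = p@_(k + U_(i))%MM.
Proof.
rewrite raddf_sum big_mkcond /=.
rewrite -(@big_msupp_delta p (fun m => p@_m) (k + U_(i))%MM); last first.
  by move=> m /memN_msupp_eq0.
apply: eq_bigr => m _; rewrite -subU_eq.
by case: (0 < m i)%N; rewrite ?mul0r ?mulr0 // mcoeffZ mcoeffX.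
Qed.

Lemma mcoeff_mulX i r k :
  ('X_i * r)@_k = if (0 < k i)%N then r@_(k - U_(i))%MM else 0.
Proof.
rewrite -commr_mpolyX; case: ifP => k_i.
  by rewrite -{1}(@submK _ U_(i) k) ?lep1mP -?lt0n // addmC mcoeffMX.
apply: memN_msupp_eq0; rewrite (perm_mem (msuppMX _ _)).
by apply/mapP => -[m' _ km]; move: k_i; rewrite km mnmDE mnm1E eqxx.
Qed.

Lemma mdeg_subUaddU i j k : (0 < k i)%N -> mdeg (k - U_(i) + U_(j))%MM = mdeg k.
Proof. by move=> k_i; rewrite mdegD !mdeg1 -(mdeg1 i) -mdegD submK // lep1mP -lt0n. Qed.

End MpolyCoefficients.

Section MpolyEvaluation.
Variable R : comNzRingType.

Lemma meval_eq_free n (i : 'I_n) (r : {mpoly R[n]}) (v w : 'I_n -> R) :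
  (forall k : 'X_{1..n}, (0 < k i)%N -> r@_k = 0) ->
  (forall j, j != i -> v j = w j) -> r.@[v] = r.@[w].
Proof.
move=> r_free vw; rewrite !mevalE; apply: eq_big_seq => k k_r; congr (_ * _).
have k_i : k i = 0%N.
  apply/eqP; rewrite -leqn0 leqNgt; apply: contraL k_r => /r_free r_k.
  by rewrite mcoeff_msupp r_k eqxx.
by apply: eq_bigr => j _; have [->|/vw ->] := eqVneq j i; rewrite ?k_i.
Qed.

Lemma mcoeff_muni n (q : {mpoly R[n.+1]}) (m : 'X_{1..n.+1}) :
  ((muni q)`_(m ord_max))@_[multinom m (widen_ord (leqnSn n) i) | i < n] = q@_m.
Proof.
rewrite muniE coef_sum raddf_sum /= -(@big_msupp_delta _ _ q (fun k => q@_k)); last first.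
  by move=> k /memN_msupp_eq0.
apply: eq_bigr => k _; rewrite coefZ coefXn.
set low := fun mm : 'X_{1..n.+1} => [multinom mm (widen_ord (leqnSn n) i) | i < n].
have -> : (k == m) = (low k == low m) && (m ord_max == k ord_max).
  apply/eqP/andP => [-> //|[/eqP low_km /eqP top_km]].
  apply/mnmP => i; have [j ->|->] := unliftP ord_max i; last by [].
  have := congr1 (fun mm : 'X_{1..n} => mm j) low_km; rewrite /low !mnmE.
  rewrite (_ : lift ord_max j = widen_ord (leqnSn n) j) //.
  by apply: val_inj; rewrite /= /bump leqNgt ltn_ord.
case: (m ord_max == k ord_max);
  by rewrite ?andbF ?andbT ?mulr0 ?mcoeff0 ?mulr1 ?mcoeffZ ?mcoeffX.
Qed.

Lemma meval_muni n (q : {mpoly R[n.+1]}) v :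
  q.@[v] =
  (map_poly (meval (fun i : 'I_n => v (widen_ord (leqnSn n) i))) (muni q)).[v ord_max].
Proof.
rewrite muniE mevalE raddf_sum horner_sum /=; apply: eq_bigr => m _.
rewrite map_polyZ map_polyXn hornerZ hornerXn /= mevalZ mevalX big_ord_recr /=.
by rewrite mulrA; congr (_ * _ * _); apply: eq_bigr => i _; rewrite mnmE.
Qed.

End MpolyEvaluation.

Section PolynomialIdentity.
Variable R : numDomainType.

Lemma poly_eq0_of_horner (P : {poly R}) : (forall t, P.[t] = 0) -> P = 0.
Proof.
move=> P0; apply: (@roots_geq_poly_eq0 _ P [seq i%:R | i <- iota 0 (size P)]).
- by apply/allP => x _; apply/rootP.
- by rewrite map_inj_uniq ?iota_uniq // => a b /eqP; rewrite eqr_nat => /eqP.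
- by rewrite size_map size_iota.
Qed.

Lemma mpoly_eq0_of_meval n (q : {mpoly R[n]}) : (forall v, q.@[v] = 0) -> q = 0.
Proof.
elim: n q => [|n IH] q q0.
  have qC : q = (q@_0%MM)%:MP by apply/mpolyP => m; rewrite mcoeffC nvar0_mnmE eqxx mulr1.
  by have := q0 (fun _ => 0); rewrite qC mevalC => ->.
apply/mpolyP => m; rewrite mcoeff0 -mcoeff_muni.
suff -> : (muni q)`_(m ord_max) = 0 by rewrite mcoeff0.
apply: IH => w; rewrite -coef_map /=.
suff -> : map_poly (meval w) (muni q) = 0 by rewrite coef0.
apply: poly_eq0_of_horner => t.
pose v (i : 'I_n.+1) := if insub (val i) is Some j then w j else t.
have := q0 v; rewrite meval_muni (_ : v ord_max = t); last by rewrite /v insubN //= ltnn.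
rewrite (@eq_map_poly _ _ _ (meval w)) // => x; apply: meval_eq => i.
by rewrite /v insubT /= ?ltn_ord // => ?; congr w; apply: val_inj.
Qed.

End PolynomialIdentity.

Lemma mdelta_le_mdeg n (m1 m2 : 'X_{1..n}) : (mdelta m1 m2 <= mdeg m1 + mdeg m2)%N.
Proof. by rewrite /mdelta !mdegE -big_split /=; apply: leq_sum => j _; lia. Qed.

Lemma mdelta_subU_le2 n (m1 m2 : 'X_{1..n}) (i k : 'I_n) :
  (0 < m1 i)%N -> (0 < m2 k)%N -> (m1 - U_(i) = m2 - U_(k))%MM ->
  (mdelta m1 m2 <= 2)%N.
Proof.
move=> m1_i m2_k m12.
have {}m12 : (m1 + U_(k) = m2 + U_(i))%MM.
  rewrite -[m1](@submK _ U_(i)) -1?[m2](@submK _ U_(k)) ?lep1mP -?lt0n // m12.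
  by rewrite -!addmA [(U_(k) + _)%MM]addmC.
apply: (@leq_trans (mdeg U_(i) + mdeg U_(k))); last by rewrite !mdeg1.
rewrite /mdelta !mdegE -big_split /=.
by apply: leq_sum => j _; have := congr1 (fun m : 'X_{1..n} => m j) m12; rewrite !mnmDE; lia.
Qed.

Lemma size_levels (T : eqType) (f : T -> nat) (s : seq T) (n : nat) (u v : T) :
  uniq s -> u != v -> u \in s -> v \in s -> f u = n -> f v = n ->
  (forall j, (0 < j < n)%N -> exists2 x, x \in s & f x = j) ->
  (n.+1 <= size s)%N.
Proof.
move=> s_uniq uv u_s v_s fu fv levels.
rewrite -(count_predC [pred x | f x < n]%N s).
have low : (n.-1 <= count [pred x | f x < n]%N s)%N.
  rewrite -size_filter -(size_map f) -(size_iota 1 n.-1).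
  apply: uniq_leq_size (iota_uniq _ _) _ => j; rewrite mem_iota => j_lt.
  have [|x x_s fx] := levels j; first lia.
  by apply/mapP; exists x; rewrite ?mem_filter /= ?fx //; lia.
have high : (2 <= count (predC [pred x | f x < n]%N) s)%N.
  rewrite -size_filter (_ : 2%N = size [:: u; v]) //.
  apply: uniq_leq_size; first by rewrite /= inE uv.
  by move=> x; rewrite !inE mem_filter /= => /orP[] /eqP->; rewrite ?fu ?fv ltnn.
lia.
Qed.

Section SimplexAffineX3.
Variables (R : realDomainType) (p : {mpoly R[3]}).
Hypothesis p_affine_x3 : forall m, m \in msupp p -> (m ix3 <= 1)%N.
Hypothesis p_simplex : forall x : 'I_3 -> R, x ix1 + x ix2 + x ix3 = 1 -> p.@[x] = 1.
Implicit Types k m : 'X_{1..3}.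

Local Notation b := (mdivX ix3 p).

Lemma mcoeff_mdivX3_x3 k : (0 < k ix3)%N -> b@_k = 0.
Proof.
move=> k3; rewrite mcoeff_mdivX memN_msupp_eq0 //.
by apply: contraTN k3 => /p_affine_x3; rewrite mnmDE mnm1E eqxx; lia.
Qed.

(* q = a + (1 - x1 - x2) b - 1 has no monomial divisible by x3 and vanishes on the
   plane x1 + x2 + x3 = 1, hence everywhere. *)
Let q := p + (1 - 'X_ix1 - 'X_ix2 - 'X_ix3) * b - 1.

Let mcoeff_q k : q@_k = p@_k + b@_k
  - (if (0 < k ix1)%N then b@_(k - U_(ix1))%MM else 0)
  - (if (0 < k ix2)%N then b@_(k - U_(ix2))%MM else 0)
  - (if (0 < k ix3)%N then b@_(k - U_(ix3))%MM else 0) - (k == 0%MM)%:R.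
Proof.
by rewrite /q !mulrBl mul1r !(mcoeffB, mcoeffD, mcoeffN) mcoeff1 !mcoeff_mulX; ring.
Qed.

Let q_eq0 : q = 0.
Proof.
apply: mpoly_eq0_of_meval => v.
pose w (i : 'I_3) := if i == ix3 then 1 - v ix1 - v ix2 else v i.
have q_free_x3 k : (0 < k ix3)%N -> q@_k = 0.
  move=> k3; rewrite mcoeff_q k3 (mcoeff_mdivX _ _ (k - U_(ix3))%MM).
  rewrite submK ?lep1mP -?lt0n //.
  rewrite !mcoeff_mdivX3_x3 ?mnmBE ?mnm1E ?subn0 // (_ : k == 0%MM = false).
    by rewrite !if_same /=; ring.
  by apply/negbTE; apply: contraTneq k3 => ->; rewrite mnm0E.
rewrite (meval_eq_free q_free_x3 (w := w)); last by move=> j /negbTE; rewrite /w => ->.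
rewrite /q !(mevalB, mevalD, mevalM) !mevalXU meval1 p_simplex /w /=; ring.
Qed.

Lemma mcoeff_simplex_recurrence k : k ix3 = 0%N -> k != 0%MM ->
  p@_k + p@_(k + U_(ix3))%MM =
    (if (0 < k ix1)%N then p@_(k - U_(ix1) + U_(ix3))%MM else 0) +
    (if (0 < k ix2)%N then p@_(k - U_(ix2) + U_(ix3))%MM else 0).
Proof.
move=> k3 k0; have := mcoeff_q k; rewrite q_eq0 mcoeff0 k3 (negbTE k0) !mcoeff_mdivX.
by move=> /= eq0; lra.
Qed.

End SimplexAffineX3.

Section PositiveX3Terms.
Variables (R : realDomainType) (p : {mpoly R[3]}).
Hypothesis p_affine_x3 : forall m, m \in msupp p -> (m ix3 <= 1)%N.
Hypothesis p_simplex : forall x : 'I_3 -> R, x ix1 + x ix2 + x ix3 = 1 -> p.@[x] = 1.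
Hypothesis p_ge0 : forall m, 0 <= p@_m.
Implicit Types k m : 'X_{1..3}.

Lemma exists_trade_x3 k : k ix3 = 0%N -> k != 0%MM ->
  0 < p@_k + p@_(k + U_(ix3))%MM ->
  exists2 i, i != ix3 & (0 < k i)%N && (0 < p@_(k - U_(i) + U_(ix3))%MM).
Proof.
move=> k3 k0; rewrite mcoeff_simplex_recurrence // => sum_gt0.
pose traded_pos i := (0 < k i)%N && (0 < p@_(k - U_(i) + U_(ix3))%MM).
have le0 i : ~~ traded_pos i ->
    (if (0 < k i)%N then p@_(k - U_(i) + U_(ix3))%MM else 0) <= 0.
  by rewrite /traded_pos; case: ifP => //= _; rewrite -leNgt.
have [|/le0 le1] := boolP (traded_pos ix1); first by exists ix1.
have [|/le0 le2] := boolP (traded_pos ix2); first by exists ix2.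
by move: sum_gt0; rewrite ltNge (le_trans (lerD le1 le2)) ?addr0.
Qed.

Lemma exists_x3_term_top d m : m \in msupp p -> m ix3 = 0%N ->
  msize p = d.+1 -> mdeg m = d -> (0 < d)%N ->
  exists2 i, i != ix3 & (0 < m i)%N && (0 < p@_(m - U_(i) + U_(ix3))%MM).
Proof.
move=> m_p m3 size_p deg_m d_gt0; apply: exists_trade_x3 => //.
  by rewrite -mdeg_eq0 -lt0n deg_m.
rewrite [p@_(_ + _)]memN_msupp_eq0 ?addr0; last first.
  by apply: msize_mdeg_ge; rewrite mdegD mdeg1 size_p deg_m addn1.
by rewrite lt_def p_ge0 andbT -mcoeff_msupp.
Qed.

Lemma x3_term_descent m : m ix3 = 1%N -> 0 < p@_m -> (1 < mdeg m)%N ->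
  exists m', [/\ m' ix3 = 1%N, 0 < p@_m' & mdeg m' = (mdeg m).-1].
Proof.
move=> m3 m_gt0 deg_m; set k := (m - U_(ix3))%MM.
have km : (k + U_(ix3))%MM = m by rewrite submK // lep1mP m3.
have deg_k : mdeg k = (mdeg m).-1 by rewrite -km mdegD mdeg1 addn1.
have [|||i i3 /andP[k_i k'_gt0]] := exists_trade_x3 (k := k).
- by rewrite mnmBE mnm1E m3.
- by rewrite -mdeg_eq0 deg_k; lia.
- by rewrite km ltr_wpDl.
exists (k - U_(i) + U_(ix3))%MM; split => //; last by rewrite mdeg_subUaddU.
by rewrite mnmDE !mnmBE !mnm1E (negbTE i3) m3.
Qed.

Lemma x3_term_levels m : m ix3 = 1%N -> 0 < p@_m ->
  forall j, (0 < j <= mdeg m)%N ->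
  exists m', [/\ m' ix3 = 1%N, 0 < p@_m' & mdeg m' = j].
Proof.
move=> m3 m_gt0 j /andP[j_gt0 j_le].
have [t] : exists t, (mdeg m - j)%N = t by exists (mdeg m - j)%N.
elim: t m m3 m_gt0 j_le => [|t IH] m m3 m_gt0 j_le gap.
  by exists m; split => //; lia.
have [|m' [m'3 m'_gt0 deg_m']] := x3_term_descent m3 m_gt0; first lia.
by apply: (IH m') => //; rewrite deg_m'; lia.
Qed.

End PositiveX3Terms.

Theorem lemma8 (R : realType) (d : nat) (p : {mpoly R[3]})
  (m1 m2 : 'X_{1..3}) :
  inH3 d p ->
  (forall m, m \in msupp p -> (m ix3 <= 1)%N) ->
  m1 \in msupp p -> m2 \in msupp p ->
  m1 ix3 = 0%N -> m2 ix3 = 0%N ->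
  mdeg m1 = d -> mdeg m2 = d ->
  (4 <= mdelta m1 m2)%N ->
  (d.+1 <= size [seq m : 'X_{1..3} <- msupp p | (0 < m ix3)%N])%N.
Proof.
move=> [size_p p_ge0 p_simplex] p_affine m1_p m2_p m1_3 m2_3 deg_m1 deg_m2 delta_m12.
have d_gt0 : (0 < d)%N by have := mdelta_le_mdeg m1 m2; lia.
have top := exists_x3_term_top p_affine p_simplex p_ge0 _ _ size_p _ d_gt0.
have [i i3 /andP[m1_i u_gt0]] := top m1 m1_p m1_3 deg_m1.
have [k k3 /andP[m2_k v_gt0]] := top m2 m2_p m2_3 deg_m2.
have traded_x3 j (m : 'X_{1..3}) :
    j != ix3 -> m ix3 = 0%N -> (m - U_(j) + U_(ix3))%MM ix3 = 1%N.
  by move=> j3 m3; rewrite mnmDE mnmBE !mnm1E (negbTE j3) m3.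
set s := [seq m <- msupp p | _].
have in_s (m : 'X_{1..3}) : m ix3 = 1%N -> 0 < p@_m -> m \in s.
  by move=> m3 m_gt0; rewrite mem_filter m3 mcoeff_msupp lt0r_neq0.
apply: (@size_levels _ mdeg _ _ (m1 - U_(i) + U_(ix3))%MM (m2 - U_(k) + U_(ix3))%MM).
- by rewrite filter_uniq ?msupp_uniq.
- by apply: contraTneq delta_m12 => /addIm /(mdelta_subU_le2 m1_i m2_k); lia.
- by rewrite in_s ?traded_x3.
- by rewrite in_s ?traded_x3.
- by rewrite mdeg_subUaddU.
- by rewrite mdeg_subUaddU.
move=> j /andP[j_gt0 j_lt].
have [|m [m3 m_gt0 deg_m]] :=
  x3_term_levels p_affine p_simplex p_ge0 (traded_x3 _ _ i3 m1_3) u_gt0 (j := j).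
  by rewrite mdeg_subUaddU // deg_m1 j_gt0 ltnW.
by exists m; rewrite ?in_s.
Qed.
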